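(* In the high-dimensional setting below, assume $\epsilon_{I,j}\ne0$ for all $j$, that for some $c>1$ $$\lambda\gamma\ge\frac{c+1}{c-1}\max_{j\in[p]}\frac{\|(X^{(n)}_{I,j^c})^\top\epsilon_{I,j}\|_\infty}{\|\epsilon_{I,j}\|_2}\quad\text{and}\quad\lambda\ge\frac{c+1}{c-1}\max_{i\in[n]}\Big(\sum_{j\in[p]}\frac{\epsilon_{ij}^2}{\|\epsilon_{I,j}\|_2^2}\Big)^{1/2},$$ and that there is $V\in\mathbb R^{n\times p}$ with $\|V_{i,\bullet}\|_2\le1$ for all $i$ such that for every $j\in[p]$ $$\|M\widehat\Delta_{\bullet,j}\|_2^2\le-2\bar\xi_{\bullet,j}^\top M\widehat\Delta_{\bullet,j}-2\lambda\|\bar\xi_{\bullet,j}\|_2V_{\bullet,j}^\top\widehat\Delta^\Theta_{\bullet,j}+2\lambda\gamma\|\bar\xi_{\bullet,j}\|_2\big(\|B^*_{j^c,j}\|_1-\|\widehat B_{j^c,j}\|_1\big)+\lambda^2\big(\gamma\|\widehat\Delta^B_{\bullet,j}\|_1+|V_{\bullet,j}^\top\widehat\Delta^\Theta_{\bullet,j}|\big)^2.$$ Then $$\|M\widehat\Delta\|_F^2\le4\lambda c\|\xi_{I,\bullet}^\top\|_{2,\infty}\big(\gamma\|\widehat\Delta^B_{\mathcal J}\|_{1,1}+\|\widehat\Delta^\Theta_{O,\bullet}\|_{2,1}\big)+\lambda^2(1+c)^2\big(\gamma\|\widehat\Delta^B_{\mathcal J}\|_{1,1}+\|\widehat\Del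ta^\Theta_{O,\bullet}\|_{2,1}\big)^2.$$
   Context: High-dimensional setting. Let $n,p\ge1$, $[n]=\{1,\dots,n\}$. $X=Y+E^*\in\mathbb R^{n\times p}$ where (C1) the rows of $Y$ are independent $\mathcal N_p(\mu^*,\Sigma^* )$, $\Sigma^*$ positive definite; (C2) $E^*$ is deterministic, $[n]=I\cup O$ a partition with the rows of $E^*$ indexed by $I$ equal to zero, and every row of $E^*(\Sigma^* )^{-1/2}$ of Euclidean norm at most $M_E\sqrt p$; $\mu^*=0$. $\Omega^*=(\Sigma^* )^{-1}$ with diagonal entries $\omega^*_{jj}$, $B^*=\Omega^*\mathrm{diag}(\Omega^* )^{-1}$, $X^{(n)}=X/\sqrt n$, $\Theta^*=E^*B^*/\sqrt n$, $\xi=X^{(n)}B^*-\Theta^*$, $\epsilon_{ij}=\sqrt n(\omega^*_{jj})^{1/2}\xi_{ij}$. Notation: $A_{i,\bullet}$, $A_{\bullet,j}$ rows/columns, $A_{K,J}$ submatrices, $j^c=[p]\setminus\{j\}$, $\|A\|_{q_1,q_2}=(\sum_i\|A_{i,\bullet}\|_{q_1}^{q_2})^{1/q_2}$, $\|A^\top\|_{2,1}=\sum_j\|A_{\bullet,j}\|_2$, $\|A^\top\|_{2,\infty}=\max_j\|A_{\bullet,j}\|_2$, $\|A\|_F=\|A\|_{2,2}$. Estimator: for $\lambda,\gamma\ge0$, $(\widehat B,\widehat\Theta)$ minimizes $F(B,\Theta)=\|(X^{(n)}B-\Theta)^\top\|_{2,1}+\lambda(\|\Theta\|_{2,1}+\gamma\|B\|_{1,1})$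 over $B\in\mathbb R^{p\times p}$ with all $B_{jj}=1$ and $\Theta\in\mathbb R^{n\times p}$. Let $\mathcal J=\{J_j:j\in[p]\}$, $J_j\subset[p]$, with $B^*_{i,j}=0$ whenever $i\notin J_j$; for a $p\times p$ matrix $A$, $A_{\mathcal J}$ zeroes entries $A_{i,j}$ with $i\notin J_j$. $\xi_O$ is the $n\times p$ matrix equal to $\xi$ on rows indexed by $O$ and zero elsewhere; $\bar\xi=\xi-\xi_O$; $\bar\Theta^*=\Theta^*+\xi_O$. $\widehat\Delta^B=\widehat B-B^*$, $\widehat\Delta^\Theta=\widehat\Theta-\bar\Theta^*$, $\widehat\Delta\in\mathbb R^{(p+n)\times p}$ stacks $\widehat\Delta^B$ above $\widehat\Delta^\Theta$; $M=[X^{(n)},\,-I_n]\in\mathbb R^{n\times(p+n)}$. *)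

From HB Require Import structures.
From mathcomp Require Import all_boot all_order all_algebra.
Set Implicit Arguments. Unset Strict Implicit. Unset Printing Implicit Defensive.
Import Order.TTheory GRing.Theory Num.Theory.
Local Open Scope ring_scope.

Section Defs.
Variable R : rcfType.

Definition scaledX n p (X : 'M[R]_(n, p)) : 'M[R]_(n, p) :=
  (Num.sqrt (n%:R))^-1 *: X.

Definition OmegaS p (Sigma : 'M[R]_p) : 'M[R]_p := invmx Sigma.

Definition Bstar p (Sigma : 'M[R]_p) : 'M[R]_p :=
  OmegaS Sigma *m diag_mx (\row_j ((OmegaS Sigma) j j)^-1).

Definition ThetaStar n p (E : 'M[R]_(n, p)) (Sigma : 'M[R]_p) : 'M[R]_(n, p) :=
  (Num.sqrt (n%:R))^-1 *: (E *m Bstar Sigma).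

Definition xi n p (X E : 'M[R]_(n, p)) (Sigma : 'M[R]_p) : 'M[R]_(n, p) :=
  scaledX X *m Bstar Sigma - ThetaStar E Sigma.

Definition epsM n p (X E : 'M[R]_(n, p)) (Sigma : 'M[R]_p) : 'M[R]_(n, p) :=
  \matrix_(i, j) (Num.sqrt (n%:R) * Num.sqrt ((OmegaS Sigma) j j) * xi X E Sigma i j).

(* xi_O : xi on rows in O = ~: I, zero elsewhere *)
Definition xiO n p (I : {set 'I_n}) (X E : 'M[R]_(n, p)) (Sigma : 'M[R]_p)
  : 'M[R]_(n, p) :=
  \matrix_(i, j) (if i \in ~: I then xi X E Sigma i j else 0).

Definition xibar n p (I : {set 'I_n}) (X E : 'M[R]_(n, p)) (Sigma : 'M[R]_p) :=
  xi X E Sigma - xiO I X E Sigma.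

Definition ThetaBar n p (I : {set 'I_n}) (X E : 'M[R]_(n, p)) (Sigma : 'M[R]_p) :=
  ThetaStar E Sigma + xiO I X E Sigma.

Definition Mmat n p (X : 'M[R]_(n, p)) : 'M[R]_(n, p + n) :=
  row_mx (scaledX X) (- 1%:M).

Definition colnorm2_on m p (K : {set 'I_m}) (A : 'M[R]_(m, p)) (j : 'I_p) : R :=
  Num.sqrt (\sum_(i in K) A i j ^+ 2).
Definition colnorm2 m p (A : 'M[R]_(m, p)) (j : 'I_p) : R :=
  Num.sqrt (\sum_i A i j ^+ 2).
Definition rownorm2 m p (A : 'M[R]_(m, p)) (i : 'I_m) : R :=
  Num.sqrt (\sum_j A i j ^+ 2).
Definition colnorm1 m p (A : 'M[R]_(m, p)) (j : 'I_p) : R :=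
  \sum_i `|A i j|.
Definition norm21T m p (A : 'M[R]_(m, p)) : R := \sum_j colnorm2 A j.
Definition norm21 m p (A : 'M[R]_(m, p)) : R := \sum_i rownorm2 A i.
Definition norm11 m p (A : 'M[R]_(m, p)) : R := \sum_i \sum_j `|A i j|.
Definition normF m p (A : 'M[R]_(m, p)) : R := Num.sqrt (\sum_i \sum_j A i j ^+ 2).

Definition Fobj n p (X : 'M[R]_(n, p)) (lambda gamma : R)
  (B : 'M[R]_p) (Theta : 'M[R]_(n, p)) : R :=
  norm21T (scaledX X *m B - Theta) + lambda * (norm21 Theta + gamma * norm11 B).

Definition restrJ p (J : 'I_p -> {set 'I_p}) (A : 'M[R]_p) : 'M[R]_p :=
  \matrix_(k, j) (if k \in J j then A k j else 0).

Definition restrRows m p (K : {set 'I_m}) (A : 'M[R]_(m, p)) : 'M[R]_(m, p) :=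
  \matrix_(i, j) (if i \in K then A i j else 0).

End Defs.

(* Write xb for the noise xi restricted to the inlier rows I, s_j > 0 for its column norms,
   kappa = (c - 1) / (c + 1), and DB, DT for the errors of the estimator.  The two tuning
   conditions say that |<xb_j / s_j, X_k>| <= kappa lambda gamma for k <> j and that every row
   (xb_ij / s_j)_j has norm at most kappa lambda.  Since DB_jj = 0 they give, for weights
   0 <= t_j <= tau,
     sum_j t_j <xb_j / s_j, X DB_j - DT_j> >= - kappa lambda tau (gamma |DB|_11 + |DT_I|_21).
   With t = 1, together with the subgradient inequality |x + y| >= |x| + <x, y> / |x| and the
   optimality of the estimator against (B*, Theta* + xi_O), whose residual is xb, this yields the
   cone condition Q <= c P, where P = gamma |DB_J|_11 + |DT_O|_21 and
   Q = gamma |DB_J^c|_11 + |DT_I|_21.  With t_j = s_j <= max_j s_j it bounds the sum over j of the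
   assumed basic inequalities by 2 lambda m (1 + kappa) (P + Q) + lambda^2 (P + Q)^2, and
   P + Q <= (1 + c) P concludes. *)

From HB Require Import structures.
From mathcomp Require Import all_boot all_order all_algebra.
From mathcomp Require Import ring lra.
Set Implicit Arguments. Unset Strict Implicit. Unset Printing Implicit Defensive.
Import Order.TTheory GRing.Theory Num.Theory.
Local Open Scope ring_scope.

Section EuclideanNorm.
Variables (R : rcfType) (T : finType).
Implicit Types a b : T -> R.

Definition l2norm a : R := Num.sqrt (\sum_i a i ^+ 2).

Lemma sumr_sqr_ge0 a : 0 <= \sum_i a i ^+ 2.
Proof. by apply: sumr_ge0 => i _; apply: sqr_ge0. Qed.

Lemma l2norm_ge0 a : 0 <= l2norm a.
Proof. exact: sqrtr_ge0. Qed.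

Lemma sqr_l2norm a : l2norm a ^+ 2 = \sum_i a i ^+ 2.
Proof. exact/sqr_sqrtr/sumr_sqr_ge0. Qed.

Lemma l2norm_gt0 a i : a i != 0 -> 0 < l2norm a.
Proof.
move=> ai0; rewrite sqrtr_gt0 (bigD1 i) //= ltr_pwDl ?exprn_even_gt0 ?ai0 //.
by apply: sumr_ge0 => k _; apply: sqr_ge0.
Qed.

Lemma l2norm_eq0 a : l2norm a = 0 -> forall i, a i = 0.
Proof.
by move=> a0 i; apply/eqP/negPn/negP => /l2norm_gt0; rewrite a0 ltxx.
Qed.

Lemma cauchy_schwarz a b : \sum_i a i * b i <= l2norm a * l2norm b.
Proof.
set na := l2norm a; set nb := l2norm b.
have [nab0|nab_neq0] := eqVneq (na * nb) 0.
  have : (na == 0) || (nb == 0) by rewrite -mulf_eq0 nab0.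
  by case/orP => /eqP/l2norm_eq0 ab0; rewrite nab0 big1 // => i _; rewrite ab0 ?mul0r ?mulr0.
have nab_gt0 : 0 < na * nb by rewrite lt_def nab_neq0 mulr_ge0 ?l2norm_ge0.
have : 0 <= \sum_i (nb * a i - na * b i) ^+ 2 by apply: sumr_sqr_ge0.
have -> : \sum_i (nb * a i - na * b i) ^+ 2 =
    nb ^+ 2 * \sum_i a i ^+ 2 - 2 * na * nb * \sum_i a i * b i + na ^+ 2 * \sum_i b i ^+ 2.
  by rewrite !mulr_sumr -sumrB -big_split /=; apply: eq_bigr => i _; ring.
rewrite -!sqr_l2norm -/na -/nb.
have -> : nb ^+ 2 * na ^+ 2 - 2 * na * nb * \sum_i a i * b i + na ^+ 2 * nb ^+ 2 =
          2 * (na * nb) * (na * nb - \sum_i a i * b i) by ring.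
by rewrite pmulr_rge0 ?subr_ge0 // mulr_gt0.
Qed.

Lemma l2norm_triangle a b : l2norm (fun i => a i + b i) <= l2norm a + l2norm b.
Proof.
rewrite -ler_sqr ?nnegrE ?addr_ge0 ?l2norm_ge0 // sqr_l2norm sqrrD !sqr_l2norm.
have -> : \sum_i (a i + b i) ^+ 2 =
    \sum_i a i ^+ 2 + 2 * \sum_i a i * b i + \sum_i b i ^+ 2.
  by rewrite mulr_sumr -!big_split /=; apply: eq_bigr => i _; ring.
have := cauchy_schwarz a b; lra.
Qed.

Lemma l2norm_subgradient a b : 0 < l2norm a ->
  l2norm a + (\sum_i a i * b i) / l2norm a <= l2norm (fun i => a i + b i).
Proof.
move=> a_gt0; rewrite -(ler_pM2r a_gt0) mulrDl mulfVK ?gt_eqF // -expr2 sqr_l2norm.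
have -> : \sum_i a i ^+ 2 + \sum_i a i * b i = \sum_i a i * (a i + b i).
  by rewrite -big_split /=; apply: eq_bigr => i _; ring.
by rewrite mulrC; apply: cauchy_schwarz.
Qed.

Lemma sumr_sqr_le_sqr_sumr a : (forall i, 0 <= a i) -> \sum_i a i ^+ 2 <= (\sum_i a i) ^+ 2.
Proof.
move=> a_ge0; rewrite expr2 mulr_suml; apply: ler_sum => i _.
by rewrite expr2 ler_wpM2l // (bigD1 i) //= lerDl sumr_ge0.
Qed.

End EuclideanNorm.

Section MatrixNorms.
Variable R : rcfType.

Lemma normF_sqr m p (A : 'M[R]_(m, p)) : normF A ^+ 2 = \sum_j colnorm2 A j ^+ 2.
Proof.
rewrite sqr_sqrtr; last by apply: sumr_ge0 => i _; apply: sumr_sqr_ge0.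
by rewrite exchange_big; apply: eq_bigr => j _; rewrite sqr_l2norm.
Qed.

Lemma colnorm2_gt0 m p (A : 'M[R]_(m, p)) i j : A i j != 0 -> 0 < colnorm2 A j.
Proof. exact: (@l2norm_gt0 _ _ (fun i => A i j)). Qed.

Lemma sum_colnorm1 m p (A : 'M[R]_(m, p)) : \sum_j colnorm1 A j = norm11 A.
Proof. exact: exchange_big. Qed.

Lemma norm11_ge0 m p (A : 'M[R]_(m, p)) : 0 <= norm11 A.
Proof. by apply: sumr_ge0 => i _; apply: sumr_ge0. Qed.

Lemma norm21_ge0 m p (A : 'M[R]_(m, p)) : 0 <= norm21 A.
Proof. by apply: sumr_ge0 => i _; apply: l2norm_ge0. Qed.

Lemma rownorm2_restrRows m p (K : {set 'I_m}) (A : 'M[R]_(m, p)) i :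
  rownorm2 (restrRows K A) i = if i \in K then rownorm2 A i else 0.
Proof.
rewrite /rownorm2; case: ifP => iK.
  by congr Num.sqrt; apply: eq_bigr => j _; rewrite mxE iK.
by rewrite big1 ?sqrtr0 // => j _; rewrite mxE iK expr0n.
Qed.

Lemma norm21_restrRowsC m p (K : {set 'I_m}) (A : 'M[R]_(m, p)) :
  norm21 (restrRows K A) + norm21 (restrRows (~: K) A) = norm21 A.
Proof.
rewrite -big_split; apply: eq_bigr => i _.
by rewrite !rownorm2_restrRows in_setC; case: (i \in K) => /=; rewrite ?addr0 ?add0r.
Qed.

Lemma sum_inner_cols_le_norm21 m p (V A : 'M[R]_(m, p)) :
  (forall i, rownorm2 V i <= 1) -> \sum_j `|\sum_i V i j * A i j| <= norm21 A.
Proof.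
move=> V_le1; apply: le_trans (_ : \sum_j \sum_i `|V i j| * `|A i j| <= _).
  apply: ler_sum => j _; apply: le_trans (ler_norm_sum _ _ _) _.
  by apply: ler_sum => i _; rewrite normrM.
rewrite exchange_big; apply: ler_sum => i _.
apply: le_trans (cauchy_schwarz (fun j => `|V i j|) (fun j => `|A i j|)) _.
rewrite /l2norm (eq_bigr _ (fun j _ => real_normK (num_real (V i j)))).
rewrite (eq_bigr (fun j => A i j ^+ 2) (fun j _ => real_normK (num_real (A i j)))).
rewrite -[X in _ <= X]mul1r -/(rownorm2 V i) -/(rownorm2 A i).
by apply: ler_wpM2r; [apply: sqrtr_ge0 | apply: V_le1].
Qed.

Lemma sum_weighted_inner_cols_le m p (V A : 'M[R]_(m, p)) (w : 'I_p -> R) M :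
  (forall i, rownorm2 V i <= 1) -> 0 <= M -> (forall j, 0 <= w j) -> (forall j, w j <= M) ->
  \sum_j - (w j * \sum_i V i j * A i j) <= M * norm21 A.
Proof.
move=> V_le1 M_ge0 w_ge0 w_le.
apply: le_trans (_ : _ <= \sum_j M * `|\sum_i V i j * A i j|) _; last first.
  by rewrite -mulr_sumr ler_wpM2l ?sum_inner_cols_le_norm21.
apply: ler_sum => j _; rewrite -mulrN; apply: le_trans (_ : _ <= w j * `|\sum_i V i j * A i j|) _.
  by rewrite ler_wpM2l // -normrN ler_norm.
by rewrite ler_wpM2r ?normr_ge0.
Qed.

Lemma sum_sqr_penalty_cols_le m p q (A : 'M[R]_(q, p)) (V D : 'M[R]_(m, p)) gamma :
  0 <= gamma -> (forall i, rownorm2 V i <= 1) ->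
  \sum_j (gamma * colnorm1 A j + `|\sum_i V i j * D i j|) ^+ 2 <=
  (gamma * norm11 A + norm21 D) ^+ 2.
Proof.
move=> gamma_ge0 V_le1.
have col_ge0 j : 0 <= gamma * colnorm1 A j + `|\sum_i V i j * D i j|.
  by rewrite addr_ge0 ?mulr_ge0 ?normr_ge0 // sumr_ge0 // => k _; apply: normr_ge0.
apply: le_trans (sumr_sqr_le_sqr_sumr col_ge0) _.
rewrite ler_sqr ?nnegrE ?sumr_ge0 ?addr_ge0 ?mulr_ge0 ?norm11_ge0 ?norm21_ge0 //.
by rewrite big_split /= -mulr_sumr sum_colnorm1 lerD2l sum_inner_cols_le_norm21.
Qed.

Lemma norm21_sub_le n p (K : {set 'I_n}) (Ts Th : 'M[R]_(n, p)) :
  (forall i j, i \in K -> Ts i j = 0) ->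
  norm21 Ts - norm21 Th <=
  norm21 (restrRows (~: K) (Th - Ts)) - norm21 (restrRows K (Th - Ts)).
Proof.
move=> Ts_K; rewrite /norm21 -!sumrB; apply: ler_sum => i _.
rewrite !rownorm2_restrRows in_setC; case iK: (i \in K) => /=.
  have -> : rownorm2 Ts i = 0 by rewrite /rownorm2 big1 ?sqrtr0 // => j _; rewrite Ts_K ?expr0n.
  have -> : rownorm2 (Th - Ts) i = rownorm2 Th i.
    by congr Num.sqrt; apply: eq_bigr => j _; rewrite !mxE Ts_K ?subr0.
  by rewrite !sub0r.
rewrite subr0 lerBlDr.
have -> : rownorm2 Ts i = l2norm (fun j => (Ts i j - Th i j) + Th i j).
  by rewrite /l2norm; under eq_bigr do rewrite subrK.
have -> : rownorm2 (Th - Ts) i = l2norm (fun j => Ts i j - Th i j).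
  by congr Num.sqrt; apply: eq_bigr => j _; rewrite !mxE -opprB sqrrN.
exact: l2norm_triangle.
Qed.

Lemma normr_restrJ p (J : 'I_p -> {set 'I_p}) (A : 'M[R]_p) k j :
  `|restrJ J A k j| = if k \in J j then `|A k j| else 0.
Proof. by rewrite mxE; case: ifP; rewrite ?normr0. Qed.

Lemma norm11_restrJC p (J : 'I_p -> {set 'I_p}) (A : 'M[R]_p) :
  norm11 (restrJ J A) + norm11 (restrJ (fun j => ~: J j) A) = norm11 A.
Proof.
rewrite -big_split; apply: eq_bigr => k _; rewrite -big_split; apply: eq_bigr => j _.
by rewrite !normr_restrJ in_setC; case: (k \in J j) => /=; rewrite ?addr0 ?add0r.
Qed.

Lemma normr_sub_supported (x y : R) (b : bool) : (~~ b -> x = 0) ->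
  `|x| - `|y| <= (if b then `|y - x| else - `|y - x|).
Proof.
case: b => [_|/(_ isT) ->]; first by rewrite distrC lerB_dist.
by rewrite subr0 normr0 sub0r.
Qed.

Lemma norm11_sub_le p (J : 'I_p -> {set 'I_p}) (Bs Bh : 'M[R]_p) :
  (forall k j, k \notin J j -> Bs k j = 0) ->
  norm11 Bs - norm11 Bh <=
  norm11 (restrJ J (Bh - Bs)) - norm11 (restrJ (fun j => ~: J j) (Bh - Bs)).
Proof.
move=> Bs_J; rewrite /norm11 -!sumrB; apply: ler_sum => k _.
rewrite -!sumrB; apply: ler_sum => j _.
apply: le_trans (normr_sub_supported (Bh k j) (Bs_J k j)) _.
by rewrite !normr_restrJ in_setC !mxE; case: (k \in J j); rewrite ?subr0 ?sub0r.
Qed.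

Lemma offdiag_norm1_sub_le p (J : 'I_p -> {set 'I_p}) (Bs Bh : 'M[R]_p) j :
  (forall k, k \notin J j -> Bs k j = 0) ->
  \sum_(k | k != j) `|Bs k j| - \sum_(k | k != j) `|Bh k j| <=
  colnorm1 (restrJ J (Bh - Bs)) j.
Proof.
move=> Bs_J; rewrite -sumrB /colnorm1 [X in _ <= X](bigD1 j) //= ler_wpDl //.
apply: ler_sum => k _; apply: le_trans (normr_sub_supported (Bh k j) (Bs_J k)) _.
by rewrite normr_restrJ !mxE; case: (k \in J j); rewrite // oppr_le0.
Qed.

Lemma sum_weighted_offdiag_sub_le p (J : 'I_p -> {set 'I_p}) (Bs Bh : 'M[R]_p)
    (w : 'I_p -> R) M :
  (forall k j, k \notin J j -> Bs k j = 0) -> (forall j, 0 <= w j) -> (forall j, w j <= M) ->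
  \sum_j w j * (\sum_(k | k != j) `|Bs k j| - \sum_(k | k != j) `|Bh k j|) <=
  M * norm11 (restrJ J (Bh - Bs)).
Proof.
move=> Bs_J w_ge0 w_le; rewrite -sum_colnorm1 mulr_sumr; apply: ler_sum => j _.
apply: le_trans (_ : _ <= w j * colnorm1 (restrJ J (Bh - Bs)) j) _.
  by apply: ler_wpM2l => //; apply: offdiag_norm1_sub_le => k; apply: Bs_J.
by rewrite ler_wpM2r // sumr_ge0 // => k _; apply: normr_ge0.
Qed.
End MatrixNorms.

Lemma cone_bound (R : realFieldType) (c lambda m P Q L : R) :
  1 < c -> 0 <= lambda -> 0 <= m -> 0 <= P -> 0 <= Q ->
  (1 - (c - 1) / (c + 1)) * Q <= (1 + (c - 1) / (c + 1)) * P ->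
  L <= 2 * lambda * m * (1 + (c - 1) / (c + 1)) * (P + Q) + lambda ^+ 2 * (P + Q) ^+ 2 ->
  L <= 4 * lambda * c * m * P + lambda ^+ 2 * (1 + c) ^+ 2 * P ^+ 2.
Proof.
move=> c_gt1 lambda_ge0 m_ge0 P_ge0 Q_ge0 cone.
have c1_neq0 : c + 1 != 0 by rewrite gt_eqF //; lra.
have kappaM : 1 + (c - 1) / (c + 1) = 2 * c / (c + 1) by field.
have kappaP : 1 - (c - 1) / (c + 1) = 2 / (c + 1) by field.
rewrite kappaM kappaP in cone *.
have QcP : Q <= c * P.
  have h_ge0 : 0 <= (c + 1) / 2 by rewrite divr_ge0 //; lra.
  have := ler_wpM2l h_ge0 cone.
  have eQ : (c + 1) / 2 * (2 / (c + 1) * Q) = Q by field.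
  have eP : (c + 1) / 2 * (2 * c / (c + 1) * P) = c * P by field.
  by rewrite eQ eP.
have /andP[NP_ge0 NP_le] : 0 <= P + Q <= (1 + c) * P by apply/andP; split; lra.
have sq : (P + Q) ^+ 2 <= ((1 + c) * P) ^+ 2.
  by rewrite ler_sqr ?nnegrE // mulr_ge0 //; lra.
have lin : 2 * lambda * m * (2 * c / (c + 1)) * (P + Q) <= 4 * lambda * c * m * P.
  have k_ge0 : 0 <= 2 * lambda * m * (2 * c / (c + 1)).
    by rewrite !mulr_ge0 // ?invr_ge0; lra.
  have e : 2 * lambda * m * (2 * c / (c + 1)) * ((1 + c) * P) = 4 * lambda * c * m * P.
    by field.
  by rewrite -e ler_wpM2l.
move=> L_le; apply: le_trans L_le _.
have := ler_wpM2l (sqr_ge0 lambda) sq; rewrite exprMn; lra.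
Qed.

Lemma ratio_inv_le (R : realFieldType) (c a L : R) :
  1 < c -> (c + 1) / (c - 1) * a <= L -> a <= (c - 1) / (c + 1) * L.
Proof.
move=> c_gt1 h; have k_gt0 : 0 < (c - 1) / (c + 1) by rewrite divr_gt0 //; lra.
have := ler_wpM2l (ltW k_gt0) h; rewrite mulrA (_ : _ / _ * _ = 1) ?mul1r //.
by field; apply/andP; split; rewrite gt_eqF //; lra.
Qed.

Section TuningConditions.
Variables (R : rcfType) (n p : nat) (I : {set 'I_n}) (X xb : 'M[R]_(n, p)).
Variables (lambda gamma kappa : R).
Hypothesis lambda_ge0 : 0 <= lambda.
Hypothesis gamma_ge0 : 0 <= gamma.
Hypothesis kappa_ge0 : 0 <= kappa.
Hypothesis xb_out : forall i j, i \notin I -> xb i j = 0.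
Hypothesis colnorm2_xb_gt0 : forall j, 0 < colnorm2 xb j.
Hypothesis xb_design_le : forall j k, k != j ->
  `|\sum_i xb i j * scaledX X i k| <= kappa * (lambda * gamma) * colnorm2 xb j.
Hypothesis xb_rows_le : forall i,
  Num.sqrt (\sum_j (xb i j / colnorm2 xb j) ^+ 2) <= kappa * lambda.

Lemma kappa_lambda_gt0 i j : xb i j != 0 -> 0 < kappa * lambda.
Proof.
move=> xb_neq0; apply: lt_le_trans (xb_rows_le i).
apply: (@l2norm_gt0 _ _ (fun j => xb i j / colnorm2 xb j) j).
by rewrite mulf_neq0 // invr_eq0 gt_eqF.
Qed.

Lemma design_inner_le (DB : 'M[R]_p) j : DB j j = 0 ->
  `|\sum_i xb i j * (scaledX X *m DB) i j| <=
  kappa * (lambda * gamma) * colnorm2 xb j * colnorm1 DB j.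
Proof.
move=> DBjj; have -> : \sum_i xb i j * (scaledX X *m DB) i j =
                       \sum_k DB k j * \sum_i xb i j * scaledX X i k.
  under eq_bigr do rewrite mxE mulr_sumr.
  by rewrite exchange_big; apply: eq_bigr => k _; rewrite mulr_sumr; apply: eq_bigr => i _; ring.
rewrite /colnorm1 mulr_sumr; apply: le_trans (ler_norm_sum _ _ _) _.
apply: ler_sum => k _; rewrite normrM mulrC; have [->|kj] := eqVneq k j.
  by rewrite DBjj normr0 !mulr0.
by apply: ler_wpM2r; [apply: normr_ge0 | apply: xb_design_le].
Qed.

Lemma weighted_inner_rows_le (A : 'M[R]_(n, p)) (t : 'I_p -> R) tau :
  0 <= tau -> (forall j, `|t j| <= tau) ->
  \sum_j t j / colnorm2 xb j * \sum_i xb i j * A i j <=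
  kappa * lambda * tau * norm21 (restrRows I A).
Proof.
move=> tau_ge0 t_le; have -> : \sum_j t j / colnorm2 xb j * \sum_i xb i j * A i j =
    \sum_i \sum_j xb i j / colnorm2 xb j * (t j * A i j).
  rewrite exchange_big; apply: eq_bigr => j _; rewrite mulr_sumr.
  by apply: eq_bigr => i _; ring.
rewrite /norm21 mulr_sumr; apply: ler_sum => i _; rewrite rownorm2_restrRows.
case: ifPn => iI; last by rewrite mulr0 big1 // => j _; rewrite xb_out // !mul0r.
apply: le_trans (cauchy_schwarz _ _) _; rewrite -mulrA.
apply: ler_pM; [exact: l2norm_ge0 | exact: l2norm_ge0 | exact: xb_rows_le |].
rewrite -[tau]ger0_norm // -sqrtr_sqr -sqrtrM ?sqr_ge0 // ler_sqrt; last first.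
  by rewrite mulr_ge0 ?sqr_ge0 ?sumr_sqr_ge0.
rewrite mulr_sumr; apply: ler_sum => j _; rewrite exprMn ler_wpM2r ?sqr_ge0 //.
by rewrite -real_normK ?num_real // ler_sqr ?nnegrE ?normr_ge0 ?t_le.
Qed.

Lemma weighted_inner_residual_ge (DB : 'M[R]_p) (DT : 'M[R]_(n, p)) (t : 'I_p -> R) tau :
  (forall j, DB j j = 0) -> 0 <= tau -> (forall j, 0 <= t j) -> (forall j, t j <= tau) ->
  - (kappa * lambda * tau * (gamma * norm11 DB + norm21 (restrRows I DT))) <=
  \sum_j t j / colnorm2 xb j * \sum_i xb i j * (scaledX X *m DB - DT) i j.
Proof.
move=> DB_diag tau_ge0 t_ge0 t_le.
have design_part : - (kappa * lambda * tau * gamma * norm11 DB) <=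
    \sum_j t j / colnorm2 xb j * \sum_i xb i j * (scaledX X *m DB) i j.
  rewrite -sum_colnorm1 mulr_sumr -sumrN; apply: ler_sum => j _.
  have s_gt0 := colnorm2_xb_gt0 j.
  have ts_ge0 : 0 <= t j / colnorm2 xb j by rewrite divr_ge0 // ltW.
  apply: lerNnormlW; rewrite normrM ger0_norm //.
  apply: le_trans (ler_wpM2l ts_ge0 (design_inner_le (DB_diag j))) _.
  set w := kappa * lambda * gamma * colnorm1 DB j.
  have w_ge0 : 0 <= w by rewrite !mulr_ge0 // sumr_ge0 // => k _; apply: normr_ge0.
  have -> : t j / colnorm2 xb j * (kappa * (lambda * gamma) * colnorm2 xb j * colnorm1 DB j)
            = t j * w by rewrite /w; field; rewrite gt_eqF.
  have -> : kappa * lambda * tau * gamma * colnorm1 DB j = tau * w by rewrite /w; ring.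
  exact: ler_wpM2r.
have t_norm : forall j, `|t j| <= tau by move=> j; rewrite ger0_norm.
have rows_part := weighted_inner_rows_le DT tau_ge0 t_norm.
have -> : \sum_j t j / colnorm2 xb j * \sum_i xb i j * (scaledX X *m DB - DT) i j =
    \sum_j t j / colnorm2 xb j * \sum_i xb i j * (scaledX X *m DB) i j -
    \sum_j t j / colnorm2 xb j * \sum_i xb i j * DT i j.
  rewrite -sumrB; apply: eq_bigr => j _; rewrite -mulrBr -sumrB.
  by congr (_ * _); apply: eq_bigr => i _; rewrite !mxE mulrBr.
move: design_part rows_part; lra.
Qed.

Lemma norm21T_subgradient (MD : 'M[R]_(n, p)) :
  norm21T xb + \sum_j 1 / colnorm2 xb j * \sum_i xb i j * MD i j <= norm21T (xb + MD).
Proof.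
rewrite /norm21T -big_split; apply: ler_sum => j _ /=; rewrite mul1r mulrC.
have -> : colnorm2 (xb + MD) j = l2norm (fun i => xb i j + MD i j).
  by congr Num.sqrt; apply: eq_bigr => i _; rewrite mxE.
exact: l2norm_subgradient (colnorm2_xb_gt0 j).
Qed.

Lemma cone_condition (J : 'I_p -> {set 'I_p}) (Bs Bh : 'M[R]_p) (Ts Th : 'M[R]_(n, p)) :
  0 < lambda ->
  (forall k j, k \notin J j -> Bs k j = 0) ->
  (forall i j, i \in I -> Ts i j = 0) ->
  (forall j, Bh j j = Bs j j) ->
  scaledX X *m Bs - Ts = xb ->
  Fobj X lambda gamma Bh Th <= Fobj X lambda gamma Bs Ts ->
  (1 - kappa) * (gamma * norm11 (restrJ (fun j => ~: J j) (Bh - Bs))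
                 + norm21 (restrRows I (Th - Ts))) <=
  (1 + kappa) * (gamma * norm11 (restrJ J (Bh - Bs)) + norm21 (restrRows (~: I) (Th - Ts))).
Proof.
move=> lambda_gt0 Bs_J Ts_I Bh_diag fit opt.
set DB := Bh - Bs; set DT := Th - Ts.
have DB_diag : forall j, DB j j = 0 by move=> j; rewrite !mxE Bh_diag subrr.
have fitBh : scaledX X *m Bh - Th = xb + (scaledX X *m DB - DT).
  by rewrite -fit mulmxBr opprB addrACA [_ *m Bs + _]addrC subrK addKr.
have inner := weighted_inner_residual_ge DT DB_diag ler01 (fun=> ler01) (fun=> lexx 1).
have pen_T := ler_wpM2l (ltW lambda_gt0) (norm21_sub_le Th Ts_I).
have pen_B := ler_wpM2l (mulr_ge0 (ltW lambda_gt0) gamma_ge0) (norm11_sub_le Bh Bs_J).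
have split_B := norm11_restrJC J DB.
have wO_ge0 : 0 <= kappa * lambda * norm21 (restrRows (~: I) DT).
  by rewrite !mulr_ge0 ?norm21_ge0.
move: opt; rewrite /Fobj fitBh fit => opt.
have low := norm21T_subgradient (scaledX X *m DB - DT).
rewrite -/DT -/DB in pen_T pen_B; rewrite -split_B in inner.
have : 0 <= lambda * ((1 + kappa) * (gamma * norm11 (restrJ J DB) + norm21 (restrRows (~: I) DT))
    - (1 - kappa) * (gamma * norm11 (restrJ (fun j => ~: J j) DB) + norm21 (restrRows I DT))).
  by move: opt low inner pen_T pen_B wO_ge0; lra.
by rewrite pmulr_rge0 // subr_ge0.
Qed.

Lemma basic_inequality_sum_le (J : 'I_p -> {set 'I_p}) (Bs Bh : 'M[R]_p)
    (Ts Th V : 'M[R]_(n, p)) (m : R) :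
  (forall k j, k \notin J j -> Bs k j = 0) -> (forall j, Bh j j = Bs j j) ->
  0 <= m -> (forall j, colnorm2 xb j <= m) -> (forall i, rownorm2 V i <= 1) ->
  (forall j, colnorm2 (scaledX X *m (Bh - Bs) - (Th - Ts)) j ^+ 2 <=
     - 2 * (\sum_i xb i j * (scaledX X *m (Bh - Bs) - (Th - Ts)) i j)
     - 2 * lambda * colnorm2 xb j * (\sum_i V i j * (Th - Ts) i j)
     + 2 * lambda * gamma * colnorm2 xb j *
         ((\sum_(k | k != j) `|Bs k j|) - (\sum_(k | k != j) `|Bh k j|))
     + lambda ^+ 2 * (gamma * colnorm1 (Bh - Bs) j + `|\sum_i V i j * (Th - Ts) i j|) ^+ 2) ->
  \sum_j colnorm2 (scaledX X *m (Bh - Bs) - (Th - Ts)) j ^+ 2 <=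
  2 * lambda * m * (1 + kappa) * (gamma * norm11 (Bh - Bs) + norm21 (Th - Ts))
  + lambda ^+ 2 * (gamma * norm11 (Bh - Bs) + norm21 (Th - Ts)) ^+ 2.
Proof.
move=> Bs_J Bh_diag m_ge0 s_le V_le1 basic.
set DB := Bh - Bs in basic *; set DT := Th - Ts in basic *.
set MD := scaledX X *m DB - DT in basic *.
have DB_diag j : DB j j = 0 by rewrite !mxE Bh_diag subrr.
have s_ge0 j : 0 <= colnorm2 xb j by apply: ltW.
have fit_term : - (kappa * lambda * m * (gamma * norm11 DB + norm21 (restrRows I DT))) <=
                \sum_j \sum_i xb i j * MD i j.
  have := weighted_inner_residual_ge DT DB_diag m_ge0 s_ge0 s_le.
  by under eq_bigr do rewrite divff ?mul1r ?gt_eqF //.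
have w_ge0 t : 0 <= t -> forall j, 0 <= t * colnorm2 xb j by move=> *; rewrite mulr_ge0.
have w_le t : 0 <= t -> forall j, t * colnorm2 xb j <= t * m by move=> *; rewrite ler_wpM2l.
have l_ge0 : 0 <= 2 * lambda by rewrite mulr_ge0.
have lg_ge0 : 0 <= 2 * lambda * gamma by rewrite mulr_ge0.
have V_term := sum_weighted_inner_cols_le DT V_le1 (mulr_ge0 l_ge0 m_ge0)
  (w_ge0 _ l_ge0) (w_le _ l_ge0).
have J_term := sum_weighted_offdiag_sub_le Bh Bs_J (w_ge0 _ lg_ge0) (w_le _ lg_ge0).
have JB_le : 2 * lambda * gamma * m * norm11 (restrJ J DB) <= 2 * lambda * gamma * m * norm11 DB.
  by rewrite ler_wpM2l ?mulr_ge0 // -(norm11_restrJC J DB) lerDl norm11_ge0.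
have quad_term := ler_wpM2l (sqr_ge0 lambda) (sum_sqr_penalty_cols_le DB DT gamma_ge0 V_le1).
have wI_le : kappa * lambda * m * norm21 (restrRows I DT) <= kappa * lambda * m * norm21 DT.
  rewrite ler_wpM2l ?mulr_ge0 // -(norm21_restrRowsC I DT) lerDl; exact: norm21_ge0.
apply: le_trans (ler_sum _ (fun j _ => basic j)) _.
rewrite !big_split /= -mulr_sumr.
rewrite mulr_sumr in quad_term.
move: fit_term V_term J_term JB_le quad_term wI_le; lra.
Qed.
End TuningConditions.

Section GaussianModel.
Variables (R : rcfType) (n p : nat) (X E : 'M[R]_(n, p)) (Sigma : 'M[R]_p).
Variable I : {set 'I_n}.
Hypothesis n_gt0 : (0 < n)%N.
Hypothesis Sigma_pd : forall x : 'rV[R]_p, x != 0 -> 0 < (x *m Sigma *m x^T) 0 0.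

Lemma Sigma_unit : Sigma \in unitmx.
Proof.
rewrite unitmxE unitfE; apply/negP => /det0P[v v_neq0 vSigma].
by have := Sigma_pd v_neq0; rewrite vSigma mul0mx mxE ltxx.
Qed.

Lemma OmegaS_diag_gt0 j : 0 < OmegaS Sigma j j.
Proof.
set y := row j (OmegaS Sigma).
have ySigma : y *m Sigma = 'e_j by rewrite -row_mul mulVmx ?Sigma_unit // row1.
have y_neq0 : y != 0.
  apply/eqP => y0; move: ySigma; rewrite y0 mul0mx => /matrixP/(_ 0 j).
  by rewrite !mxE !eqxx /= => /eqP; rewrite eq_sym oner_eq0.
by have := Sigma_pd y_neq0; rewrite ySigma -rowE !mxE.
Qed.

Lemma Bstar_diag j : Bstar Sigma j j = 1.
Proof. by rewrite /Bstar mul_mx_diag !mxE mulfV // gt_eqF // OmegaS_diag_gt0. Qed.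

Lemma xibar_inside i j : i \in I -> xibar I X E Sigma i j = xi X E Sigma i j.
Proof. by move=> iI; rewrite !mxE in_setC iI subr0. Qed.

Lemma xibar_outside i j : i \notin I -> xibar I X E Sigma i j = 0.
Proof. by move=> iI; rewrite !mxE in_setC iI subrr. Qed.

Lemma colnorm2_xibar j : colnorm2 (xibar I X E Sigma) j = colnorm2_on I (xi X E Sigma) j.
Proof.
rewrite /colnorm2 /colnorm2_on [in RHS]big_mkcond; congr Num.sqrt; apply: eq_bigr => i _.
by case: ifPn => iI; [rewrite xibar_inside | rewrite xibar_outside // expr0n].
Qed.

Lemma epsME i j :
  epsM X E Sigma i j = Num.sqrt n%:R * Num.sqrt (OmegaS Sigma j j) * xi X E Sigma i j.
Proof. exact: mxE. Qed.

Lemma sum_inside_epsM (f : 'I_n -> R) j :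
  \sum_(i in I) f i * epsM X E Sigma i j =
  Num.sqrt n%:R * Num.sqrt (OmegaS Sigma j j) * \sum_i xibar I X E Sigma i j * f i.
Proof.
rewrite mulr_sumr big_mkcond; apply: eq_bigr => i _.
case: ifPn => iI; [rewrite xibar_inside // epsME; ring | by rewrite xibar_outside // mul0r mulr0].
Qed.

Lemma colnorm2_on_epsM j :
  colnorm2_on I (epsM X E Sigma) j =
  Num.sqrt n%:R * Num.sqrt (OmegaS Sigma j j) * colnorm2 (xibar I X E Sigma) j.
Proof.
rewrite colnorm2_xibar /colnorm2_on.
rewrite (eq_bigr (fun i => (Num.sqrt n%:R * Num.sqrt (OmegaS Sigma j j)) ^+ 2 * xi X E Sigma i j ^+ 2)).
  by rewrite -mulr_sumr sqrtrM ?sqr_ge0 // sqrtr_sqr ger0_norm // mulr_ge0 ?sqrtr_ge0.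
by move=> i _; rewrite mxE exprMn.
Qed.

Lemma xibar_neq0 i j : i \in I -> epsM X E Sigma i j != 0 -> xibar I X E Sigma i j != 0.
Proof.
move=> iI; rewrite xibar_inside //; apply: contraNneq => xi0.
by rewrite epsME xi0 mulr0.
Qed.

Lemma epsM_scale_gt0 j : 0 < Num.sqrt n%:R * Num.sqrt (OmegaS Sigma j j).
Proof. by rewrite mulr_gt0 ?sqrtr_gt0 ?ltr0n ?OmegaS_diag_gt0. Qed.

Lemma xibar_design_le (c L : R) j k : 1 < c -> 0 < colnorm2 (xibar I X E Sigma) j ->
  (c + 1) / (c - 1) * (`|\sum_(i in I) scaledX X i k * epsM X E Sigma i j|
                        / colnorm2_on I (epsM X E Sigma) j) <= L ->
  `|\sum_i xibar I X E Sigma i j * scaledX X i k| <=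
  (c - 1) / (c + 1) * L * colnorm2 (xibar I X E Sigma) j.
Proof.
move=> c_gt1 s_gt0 /(ratio_inv_le c_gt1).
rewrite sum_inside_epsM colnorm2_on_epsM normrM (gtr0_norm (epsM_scale_gt0 j)).
by rewrite -mulf_div divff ?gt_eqF ?epsM_scale_gt0 // mul1r ler_pdivrMr.
Qed.

Lemma xibar_rows_le (c L : R) i : 1 < c -> 0 <= L ->
  (c + 1) / (c - 1) * Num.sqrt (\sum_j (epsM X E Sigma i j ^+ 2
                                        / colnorm2_on I (epsM X E Sigma) j ^+ 2)) <= L ->
  Num.sqrt (\sum_j (xibar I X E Sigma i j / colnorm2 (xibar I X E Sigma) j) ^+ 2) <=
  (c - 1) / (c + 1) * L.
Proof.
move=> c_gt1 L_ge0 /(ratio_inv_le c_gt1); have [iI|iI] := boolP (i \in I); last first.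
  move=> _; rewrite big1 ?sqrtr0 => [|j _]; last by rewrite xibar_outside // mul0r expr0n.
  by rewrite mulr_ge0 // divr_ge0 //; lra.
congr (Num.sqrt _ <= _); apply: eq_bigr => j _.
rewrite colnorm2_on_epsM epsME -xibar_inside // -expr_div_n -mulf_div.
by rewrite divff ?gt_eqF ?epsM_scale_gt0 // mul1r.
Qed.

Lemma ThetaBar_inside : (forall i j, i \in I -> E i j = 0) ->
  forall i j, i \in I -> ThetaBar I X E Sigma i j = 0.
Proof.
move=> E_I i j iI; rewrite !mxE in_setC iI addr0 big1 ?mulr0 // => k _.
by rewrite E_I ?mul0r.
Qed.

Lemma fit_Bstar : scaledX X *m Bstar Sigma - ThetaBar I X E Sigma = xibar I X E Sigma.
Proof. by rewrite /xibar /ThetaBar /xi opprD addrA. Qed.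

Lemma Mmat_mul_col_mx (A : 'M[R]_p) (D : 'M[R]_(n, p)) :
  Mmat X *m col_mx A D = scaledX X *m A - D.
Proof. by rewrite /Mmat mul_row_col mulNmx mul1mx. Qed.

End GaussianModel.

Theorem mainTheorem18
  (R : rcfType) (n p : nat) (Hn : (0 < n)%N) (Hp : (0 < p)%N)
  (X E : 'M[R]_(n, p)) (Sigma : 'M[R]_p) (I : {set 'I_n}) (ME : R)
  (HSsym : Sigma^T = Sigma)
  (HSpd : forall x : 'rV[R]_p, x != 0 -> 0 < (x *m Sigma *m x^T) 0 0)
  (* (C2): rows of E* indexed by I vanish; ||E*_i Sigma^{-1/2}||_2 <= M_E sqrt p,
     written as E*_i Omega* E*_i^T <= M_E^2 p *)
  (HEI : forall i j, i \in I -> E i j = 0)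
  (HME0 : 0 <= ME)
  (HME : forall i : 'I_n,
     (row i E *m OmegaS Sigma *m (row i E)^T) 0 0 <= ME ^+ 2 * p%:R)
  (J : 'I_p -> {set 'I_p})
  (HJ : forall k j, k \notin J j -> Bstar Sigma k j = 0)
  (lambda gamma c : R) (Hl0 : 0 <= lambda) (Hg0 : 0 <= gamma)
  (Bh : 'M[R]_p) (Th : 'M[R]_(n, p))
  (HBdiag : forall j, Bh j j = 1)
  (Hmin : forall (B : 'M[R]_p) (T : 'M[R]_(n, p)), (forall j, B j j = 1) ->
     Fobj X lambda gamma Bh Th <= Fobj X lambda gamma B T)
  (Heps : forall j, exists2 i, i \in I & epsM X E Sigma i j != 0)
  (Hc : 1 < c)
  (Hlg : forall j k : 'I_p, k != j ->
     (c + 1) / (c - 1) *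
       (`|\sum_(i in I) scaledX X i k * epsM X E Sigma i j|
          / colnorm2_on I (epsM X E Sigma) j)
     <= lambda * gamma)
  (Hlam : forall i : 'I_n,
     (c + 1) / (c - 1) *
       Num.sqrt (\sum_j (epsM X E Sigma i j ^+ 2
                          / colnorm2_on I (epsM X E Sigma) j ^+ 2))
     <= lambda)
  (HV : let DB := Bh - Bstar Sigma in
        let DT := Th - ThetaBar I X E Sigma in
        let MD := Mmat X *m col_mx DB DT in
        let xb := xibar I X E Sigma in
        exists V : 'M[R]_(n, p),
          (forall i, rownorm2 V i <= 1) /\
          (forall j : 'I_p,
             colnorm2 MD j ^+ 2 <=
               - 2 * (\sum_i xb i j * MD i j)
               - 2 * lambda * colnorm2 xb j * (\sum_i V i j * DT i j)
               + 2 * lambda * gamma * colnorm2 xb j *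
                   ((\sum_(k | k != j) `|Bstar Sigma k j|)
                    - (\sum_(k | k != j) `|Bh k j|))
               + lambda ^+ 2 * (gamma * colnorm1 DB j
                                + `|\sum_i V i j * DT i j|) ^+ 2)) :
  let DB := Bh - Bstar Sigma in
  let DT := Th - ThetaBar I X E Sigma in
  let MD := Mmat X *m col_mx DB DT in
  let xiI2inf := \big[Num.max/0]_(j < p) colnorm2_on I (xi X E Sigma) j in
  let S := gamma * norm11 (restrJ J DB) + norm21 (restrRows (~: I) DT) in
  normF MD ^+ 2 <=
    4 * lambda * c * xiI2inf * S + lambda ^+ 2 * (1 + c) ^+ 2 * S ^+ 2.
Proof.
cbv zeta in HV |- *; have [V [V_le1 basic]] := HV.
rewrite Mmat_mul_col_mx in basic *; rewrite normF_sqr.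
set xb := xibar I X E Sigma; set kappa := (c - 1) / (c + 1).
set m := \big[Num.max/0]_(j < p) _.
have kappa_gt0 : 0 < kappa by rewrite divr_gt0 //; lra.
have s_gt0 j : 0 < colnorm2 xb j.
  by have [i iI eps_ij] := Heps j; apply: colnorm2_gt0 (xibar_neq0 iI eps_ij).
have design j k (kj : k != j) := xibar_design_le Hn HSpd Hc (s_gt0 j) (Hlg j k kj).
have rows i := xibar_rows_le Hn HSpd Hc Hl0 (Hlam i).
have lambda_gt0 : 0 < lambda.
  have [i iI eps_ij] := Heps (Ordinal Hp).
  by have := kappa_lambda_gt0 s_gt0 rows (xibar_neq0 iI eps_ij); rewrite pmulr_rgt0.
have s_le j : colnorm2 xb j <= m by rewrite colnorm2_xibar; apply: le_bigmax.
have m_ge0 : 0 <= m := le_trans (ltW (s_gt0 (Ordinal Hp))) (s_le _).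
have Bh_diag j : Bh j j = Bstar Sigma j j by rewrite Bstar_diag ?HBdiag.
have xb_out i j : i \notin I -> xb i j = 0 by apply: xibar_outside.
have cone := cone_condition Hl0 Hg0 (ltW kappa_gt0) xb_out s_gt0 design rows lambda_gt0
  HJ (ThetaBar_inside X Sigma HEI) Bh_diag (fit_Bstar X E Sigma I) (Hmin _ _ (Bstar_diag HSpd)).
have := basic_inequality_sum_le Hl0 Hg0 (ltW kappa_gt0) xb_out s_gt0 design rows
  HJ Bh_diag m_ge0 s_le V_le1 basic.
rewrite -(norm11_restrJC J (Bh - Bstar Sigma)) -(norm21_restrRowsC (~: I) (Th - _)) setCK.
rewrite (mulrDr gamma) addrACA.
by apply: (cone_bound Hc Hl0 m_ge0 _ _ cone); rewrite addr_ge0 ?mulr_ge0 ?norm11_ge0 ?norm21_ge0.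
Qed.
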